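(* Let $R$ be a domain and $x$ a nonzero nonunit element of $R^+$. (i) If $R$ has characteristic zero, then the ideal $(x^\infty)R^+$ has a free resolution of length (at most) one by countably generated free $R^+$-modules; in particular $\mathrm{pd}_{R^+}((x^\infty)R^+)\le 1$. If moreover $R$ is Noetherian, local and Henselian, then $\mathrm{pd}_{R^+}((x^\infty)R^+)=1$. (ii) If $R$ has prime characteristic $p$, then $(x^\infty)R^+$ has a free resolution of length (at most) one by countably generated free $R^+$-modules; if moreover $R$ is Noetherian, local and Henselian, then $\mathrm{pd}_{R^+}((x^\infty)R^+)=1$.
   Context: $R^+$ denotes the integral closure of the domain $R$ in an algebraic closure of its field of fractions. If $\mathrm{char}\,R=0$, $(x^\infty)R^+$ denotes the ideal $(x^{1/n}: n\in\mathbb{N})R^+$, where $x^{1/n}\in R^+$ is a compatible system of roots (i.e. $(x^{1/nm})^m=x^{1/n}$). If $\mathrm{char}\,R=p>0$, $(x^\infty)R^+$ denotes $(x^{1/p^n}: n\ge 0)R^+$ with $x^{1/p^n}$ the unique $p^n$-th root. *)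

From HB Require Import structures.
From mathcomp Require Import all_boot all_order all_algebra.
Set Implicit Arguments. Unset Strict Implicit. Unset Printing Implicit Defensive.
Import Order.TTheory GRing.Theory Num.Theory.
Local Open Scope ring_scope.

Definition is_ideal (A : comRingType) (J : A -> Prop) : Prop :=
  [/\ J 0, (forall a b, J a -> J b -> J (a + b)) & (forall c a, J a -> J (c * a))].

Definition noetherian (A : comRingType) : Prop :=
  forall J : nat -> A -> Prop, (forall n, is_ideal (J n)) ->
    (forall n a, J n a -> J n.+1 a) ->
    exists n, forall m a, (n <= m)%N -> J m a -> J n a.

(* Local ring: the non-units form an ideal (A is nontrivial as a unit ring). *)
Definition local_ring (A : comUnitRingType) : Prop :=
  forall a b : A, a \notin GRing.unit -> b \notin GRing.unit ->
    (a + b) \notin GRing.unit.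

(* Henselian local ring (Stacks 04GE): local, and every simple root modulo the
   maximal ideal m (= non-units) of a monic polynomial lifts to a root. *)
Definition henselian_local (A : comUnitRingType) : Prop :=
  local_ring A /\
  forall (g : {poly A}) (a : A), g \is monic -> g.[a] \notin GRing.unit ->
    (g^`()).[a] \is a GRing.unit ->
    exists b, root g b /\ (b - a) \notin GRing.unit.

Definition char_zero (A : nzRingType) : Prop := forall n : nat, (0 < n)%N -> n%:R != 0 :> A.
Definition char_p (A : nzRingType) (p : nat) : Prop := prime p /\ p%:R = 0 :> A.

(* These properties characterise R^+ up to R-isomorphism. *)
Definition is_abs_integral_closure (R S : idomainType) (f : {rmorphism R -> S}) : Prop :=
  [/\ injective f,
      (forall s : S, exists p : {poly R}, p \is monic /\ root (map_poly f p) s)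
    & (forall q : {poly S}, q \is monic -> (1 < size q)%N -> exists s, root q s)].

(* Compatible systems of roots: char 0, r n = x^{1/n} (n >= 1). *)
Definition compat_roots0 (S : idomainType) (x : S) (r : nat -> S) : Prop :=
  r 1%N = x /\ forall n m : nat, (0 < n)%N -> (0 < m)%N -> r (n * m)%N ^+ m = r n.

(* char p: r n = x^{1/p^n}. *)
Definition compat_rootsp (S : idomainType) (p : nat) (x : S) (r : nat -> S) : Prop :=
  r 0%N = x /\ forall n : nat, r n.+1 ^+ p = r n.

(* (x^infty) S in char 0: ideal generated by the r n, n >= 1. *)
Definition xinf_ideal0 (S : idomainType) (r : nat -> S) (a : S) : Prop :=
  exists (k : nat) (c : nat -> S), a = \sum_(i < k) c i * r i.+1.

(* (x^infty) S in char p: ideal generated by the r n, n >= 0. *)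
Definition xinf_idealp (S : idomainType) (r : nat -> S) (a : S) : Prop :=
  exists (k : nat) (c : nat -> S), a = \sum_(i < k) c i * r i.

(* The countably generated free S-module S^(N) is modelled by {poly S}
   (free with basis 'X^i, i in N). *)
Definition lin_free (S : comRingType) (h : {poly S} -> {poly S}) : Prop :=
  forall (c : S) (u v : {poly S}), h (c *: u + v) = c *: h u + h v.
Definition lin_to_ring (S : comRingType) (h : {poly S} -> S) : Prop :=
  forall (c : S) (u v : {poly S}), h (c *: u + v) = c * h u + h v.

Definition free_res_len_le1 (S : comRingType) (I : S -> Prop) : Prop :=
  exists (d1 : {poly S} -> {poly S}) (d0 : {poly S} -> S),
    [/\ lin_free d1, lin_to_ring d0, injective d1,
        (forall s, I s <-> exists u, d0 u = s)
      & (forall u, d0 u = 0 <-> exists v, d1 v = u)].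

Definition lin_on (S : comRingType) (I : S -> Prop) (N : lmodType S) (g : S -> N) : Prop :=
  forall c a b, I a -> I b -> g (c * a + b) = c *: g a + g b.

Definition projective_ideal (S : comRingType) (I : S -> Prop) : Prop :=
  forall (M N : lmodType S) (pi : M -> N),
    (forall (c : S) u v, pi (c *: u + v) = c *: pi u + pi v) ->
    (forall n, exists m, pi m = n) ->
    forall g : S -> N, lin_on I g ->
    exists h : S -> M, lin_on I h /\ forall a, I a -> pi (h a) = g a.

From HB Require Import structures.
From mathcomp Require Import all_boot all_order all_algebra.
From mathcomp Require Import boolp.
Set Implicit Arguments. Unset Strict Implicit. Unset Printing Implicit Defensive.
Import GRing.Theory.
Local Open Scope ring_scope.

(* Proof of Lemma 4.2.  Write (g) for the ideal of S generated by a sequence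
   g : nat -> S, and eps_g : S^(N) -> (g), e_i |-> g_i, for its augmentation.
   Both ideals (x^oo)S of the statement are of this form, and two general
   facts about such ideals give the result:
   - Resolution: if (t) is "telescoping", t_n = a_n t_(n+1) with all t_n
     nonzero, then 0 -> S^(N) -> S^(N) -> (t) -> 0 is exact, the first map
     sending e_i to e_i - a_i e_(i+1).
   - Non-projectivity: if (g) contains a nonzero nonunit x and, for each D,
     some b in (g) with x = b^k whose square divides g_0, ..., g_(D-1), then
     (g) is not projective: a section h of eps_g has h(b) supported where h(x) is
     (as x h(b) = b h(x)), so b = eps_g(h(b)) is in b^2 S and b is a unit.
   In characteristic p, t_n = x^(1/p^n) is telescoping with a_n = t_(n+1)^(p-1);
   in characteristic 0 the x^(1/n) generate the same ideal as the telescoping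
   sequence x^(1/2^n).  In both cases deeper roots x^(1/N) serve as b. *)

Definition span (S : comNzRingType) (g : nat -> S) (a : S) : Prop :=
  exists (k : nat) (c : nat -> S), a = \sum_(i < k) c i * g i.

Definition augment (S : comNzRingType) (g : nat -> S) (u : {poly S}) : S :=
  \sum_(i < size u) u`_i * g i.

Section Augmentation.
Variables (S : comNzRingType) (g : nat -> S).

Lemma augment_widen (u : {poly S}) K :
  (size u <= K)%N -> augment g u = \sum_(i < K) u`_i * g i.
Proof.
move=> le_uK; rewrite /augment -(subnKC le_uK) big_split_ord /=.
by rewrite [X in _ = _ + X]big1 ?addr0 // => i _; rewrite nth_default ?mul0r ?leq_addr.
Qed.

Lemma augment_lin c (u v : {poly S}) :
  augment g (c *: u + v) = c * augment g u + augment g v.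
Proof.
set K := maxn (size u) (size v).
have le_uK : (size u <= K)%N by rewrite leq_maxl.
have le_vK : (size v <= K)%N by rewrite leq_maxr.
have le_wK : (size (c *: u + v)%R <= K)%N.
  rewrite (leq_trans (size_polyD _ _)) // geq_max le_vK andbT.
  exact: leq_trans (size_scale_leq _ _) le_uK.
rewrite !(augment_widen le_uK, augment_widen le_vK, augment_widen le_wK).
by rewrite mulr_sumr -big_split; apply: eq_bigr => i _; rewrite coefD coefZ mulrDl mulrA.
Qed.

Lemma augmentXn n : augment g 'X^n = g n.
Proof.
rewrite (@augment_widen _ n.+1) ?size_polyXn // big_ord_recr /= coefXn eqxx mul1r.
by rewrite big1 ?add0r // => i _; rewrite coefXn ltn_eqF ?mul0r.
Qed.

Lemma span_augment a : span g a <-> exists u, augment g u = a.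
Proof.
split=> [[k [c ->]] | [u <-]]; last by exists (size u), (fun i => u`_i).
exists (\poly_(i < k) c i); rewrite (augment_widen (size_poly _ _)).
by apply: eq_bigr => i _; rewrite coef_poly ltn_ord.
Qed.

Lemma augment_span u : span g (augment g u).
Proof. by apply/span_augment; exists u. Qed.

Lemma span_lin (c a b : S) : span g a -> span g b -> span g (c * a + b).
Proof.
move=> /span_augment[u <-] /span_augment[v <-]; apply/span_augment.
by exists (c *: u + v); rewrite augment_lin.
Qed.

Lemma span0 : span g 0.
Proof. by exists 0%N, (fun=> 0); rewrite big_ord0. Qed.

Lemma spanD a b : span g a -> span g b -> span g (a + b).
Proof. by move=> ga gb; rewrite -[a]mul1r; apply: span_lin. Qed.

Lemma spanM c a : span g a -> span g (c * a).
Proof. by move=> ga; rewrite -[_ * _]addr0; exact: span_lin ga span0. Qed.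

Lemma span_gen n : span g (g n).
Proof. by apply/span_augment; exists 'X^n; rewrite augmentXn. Qed.

End Augmentation.

Lemma span_sub (S : comNzRingType) (g h : nat -> S) :
  (forall n, span h (g n)) -> forall a, span g a -> span h a.
Proof.
move=> gh a /span_augment[u <-]; rewrite /augment.
by apply: big_ind => [|b c|i _]; [exact: span0 | exact: spanD | exact: spanM].
Qed.

(* The ideal (g) as an S-module: the submodule of the regular module S^o cut
   out by the (classically decided) membership predicate. *)
Section IdealModule.
Variables (S : comNzRingType) (g : nat -> S).

Definition span_pred : {pred S^o} := fun a => `[< span g a >].

Lemma span_pred_submod_closed : subsemimod_closed span_pred.
Proof.
apply: GRing.submod_closed_semi; split; first exact/asboolP/span0.
by move=> c u v /asboolP gu /asboolP gv; apply/asboolP/span_lin.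
Qed.

HB.instance Definition _ :=
  GRing.isSubmodClosed.Build S S^o span_pred span_pred_submod_closed.

Definition span_mod := {a : S^o | span_pred a}.
HB.instance Definition _ := [isSub for @sval S^o span_pred : span_mod -> S^o].
HB.instance Definition _ := [Choice of span_mod by <:].
HB.instance Definition _ := [SubChoice_isSubLmodule of span_mod by <:].

Lemma projective_section : projective_ideal (span g) ->
  exists h : S -> {poly S},
    (forall c a, span g a -> h (c * a) = c *: h a) /\
    (forall a, span g a -> augment g (h a) = a).
Proof.
move=> proj_g; pose incl (a : S) : span_mod := insubd 0 a.
have inclK a : span g a -> sval (incl a) = a.
  by move=> /asboolP ga; rewrite /incl /= val_insubd ifT.
have inclK_aug u : sval (incl (augment g u)) = augment g u.
  exact/inclK/augment_span.
have pi_lin c u v : incl (augment g (c *: u + v))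
    = c *: incl (augment g u) + incl (augment g v).
  by apply: val_inj; rewrite /= !inclK_aug; apply: augment_lin.
have pi_surj (a : span_mod) : exists u, incl (augment g u) = a.
  have /asboolP/span_augment[u ua] := valP a.
  by exists u; apply: val_inj; rewrite /= inclK_aug.
have incl_lin : lin_on (span g) incl.
  by move=> c a b ga gb; apply: val_inj; rewrite /= !inclK //; exact: span_lin.
have [h [h_lin h_sec]] := proj_g _ _ (incl \o augment g) pi_lin pi_surj _ incl_lin.
have h0 : h 0 = 0.
  have := h_lin 1 0 0 (span0 g) (span0 g); rewrite mul1r addr0 scale1r.
  by move=> e; apply: (addrI (h 0)); rewrite addr0 -e.
exists h; split=> [c a ga | a ga].
  by have := h_lin c a 0 ga (span0 g); rewrite !addr0 h0 addr0.
by have := congr1 val (h_sec a ga); rewrite /= inclK_aug inclK.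
Qed.

End IdealModule.

(* Given a section h of the augmentation, take
   D beyond the support of h(x): then h(b) lives in degrees < D because
   x h(b) = h(xb) = b h(x), so b = eps_g(h(b)) lies in b^2 S, forcing b,
   hence x, to be a unit. *)
Lemma not_projective_span (S : idomainType) (g : nat -> S) (x : S) :
  x != 0 -> x \notin GRing.unit -> span g x ->
  (forall D, exists b k, [/\ span g b, x = b ^+ k &
     forall i, (i < D)%N -> exists z, g i = b ^+ 2 * z]) ->
  ~ projective_ideal (span g).
Proof.
move=> x_neq0 x_nonunit gx deep /projective_section[h [hZ h_sec]].
have [b [k [gb xE b2_dvd]]] := deep (size (h x)).
have size_hb : (size (h b) <= size (h x))%N.
  have hxb : x *: h b = b *: h x by rewrite -!hZ // mulrC.
  by rewrite -(size_scale (h b) x_neq0) hxb size_scale_leq.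
have [z bE] : exists z, b = b ^+ 2 * z.
  rewrite -{1}(h_sec b gb) (augment_widen _ size_hb).
  apply: (big_ind (fun s => exists z, s = b ^+ 2 * z)) => [|_ _ [z1 ->] [z2 ->]|i _].
  - by exists 0; rewrite mulr0.
  - by exists (z1 + z2); rewrite mulrDr.
  - by have [z ->] := b2_dvd i (ltn_ord i); exists ((h b)`_i * z); rewrite mulrCA.
have b_neq0 : b != 0.
  apply: contraNneq x_nonunit => b0; move: x_neq0; rewrite xE b0 expr0n.
  by case: (k == 0%N); rewrite ?unitr1 ?eqxx.
have : b * (1 - b * z) = 0 by rewrite mulrBr mulr1 mulrA -expr2 -bE subrr.
move/eqP; rewrite mulf_eq0 (negbTE b_neq0) subr_eq0 => /eqP/esym bz1.
by move: x_nonunit; rewrite xE unitrX //; apply/unitrPr; exists z.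
Qed.

Definition telescoping (S : comNzRingType) (t a : nat -> S) : Prop :=
  forall n, t n = a n * t n.+1.

(* The relation map S^(N) -> S^(N), e_i |-> e_i - a_i e_(i+1). *)
Definition rel_map (S : comNzRingType) (a : nat -> S) (v : {poly S}) : {poly S} :=
  v - 'X * \poly_(i < size v) (a i * v`_i).

Section RelationMap.
Variables (S : comNzRingType) (a : nat -> S).

Lemma coef_rel_map v j :
  (rel_map a v)`_j = v`_j - (if j is k.+1 then a k * v`_k else 0).
Proof.
case: j => [|k]; rewrite coefB coefXM //= coef_poly.
by case: ltnP => // le_vk; rewrite (nth_default _ le_vk) mulr0.
Qed.

Lemma rel_map_lin c (u v : {poly S}) :
  rel_map a (c *: u + v) = c *: rel_map a u + rel_map a v.
Proof.
apply/polyP => -[|k]; rewrite !(coefD, coefZ, coef_rel_map) ?subr0 //.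
by rewrite mulrBr mulrDr mulrCA opprD addrACA.
Qed.

(* Coefficients of a preimage are recovered one degree at a time. *)
Lemma rel_map_inj : injective (rel_map a).
Proof.
move=> u v e; apply/polyP; elim=> [|k IH].
  by have := congr1 (coefp 0) e; rewrite /= !coef_rel_map !subr0.
by have := congr1 (coefp k.+1) e; rewrite /= !coef_rel_map IH => /addIr.
Qed.

(* Partial sums of a linear combination of a telescoping sequence collapse
   onto its last term: sum_(i <= k) u_i t_i = collapse u k * t_k. *)
Fixpoint collapse (u : {poly S}) (k : nat) : S :=
  if k is k'.+1 then u`_k'.+1 + a k' * collapse u k' else u`_0.

Variable t : nat -> S.
Hypothesis t_tele : telescoping t a.

Lemma partial_augment (u : {poly S}) k :
  \sum_(i < k.+1) u`_i * t i = collapse u k * t k.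
Proof.
elim: k => [|k IH]; first by rewrite big_ord1.
by rewrite big_ord_recr /= IH t_tele mulrA mulrDl addrC (mulrC _ (a k)).
Qed.

Lemma augment_rel_map v : augment t (rel_map a v) = 0.
Proof.
have le_sz : (size (rel_map a v) <= (size v).+1)%N.
  apply/leq_sizeP => -[|j] // le_vj; rewrite coef_rel_map.
  by rewrite (nth_default _ le_vj) (nth_default _ (leqW le_vj)) mulr0 subr0.
rewrite (augment_widen _ le_sz).
under eq_bigr => i _ do rewrite coef_rel_map mulrBl.
rewrite sumrB big_ord_recr big_ord_recl /= nth_default // mul0r addr0 mul0r add0r.
by apply/eqP; rewrite subr_eq0; apply/eqP/eq_bigr => i _; rewrite add0n t_tele mulrCA mulrA.
Qed.

End RelationMap.

Section TelescopingResolution.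
Variables (S : idomainType) (t a : nat -> S).
Hypotheses (t_tele : telescoping t a) (t_neq0 : forall n, t n != 0).

(* Exactness in the middle: the relations e_i - a_i e_(i+1) generate the
   kernel of the augmentation, with the partial-sum coefficients as preimage. *)
Lemma augment_kernel (u : {poly S}) :
  augment t u = 0 -> rel_map a (\poly_(i < size u) collapse a u i) = u.
Proof.
move=> eps_u.
have top0 k : size u = k.+1 -> collapse a u k = 0.
  move=> sz_u; have /eqP := partial_augment t_tele u k.
  by rewrite -sz_u -/(augment t u) eps_u eq_sym mulf_eq0 (negbTE (t_neq0 k)) orbF => /eqP.
apply/polyP => -[|k]; rewrite coef_rel_map !coef_poly /=.
  by rewrite subr0; case: ltnP => // le_u0; rewrite nth_default.
case: (ltnP k.+1 (size u)) => [lt_ku | le_uk].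
  by rewrite (ltnW lt_ku) addrK.
rewrite (nth_default _ le_uk) sub0r; case: ltnP => [lt_ku | _]; last by rewrite mulr0 oppr0.
by rewrite top0 ?mulr0 ?oppr0 //; apply/eqP; rewrite eqn_leq le_uk.
Qed.

Lemma telescoping_resolution : free_res_len_le1 (span t).
Proof.
exists (rel_map a), (augment t); split.
- exact: rel_map_lin.
- exact: augment_lin.
- exact: rel_map_inj.
- by move=> s; rewrite span_augment.
- by move=> u; split=> [/augment_kernel <- | [v <-]]; [eexists | exact: augment_rel_map].
Qed.

End TelescopingResolution.

Lemma free_res_ext (S : comNzRingType) (I J : S -> Prop) :
  (forall s, I s <-> J s) -> free_res_len_le1 I -> free_res_len_le1 J.
Proof.
move=> IJ [d1 [d0 [d1_lin d0_lin d1_inj d0_im d0_ker]]].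
by exists d1, d0; split=> // s; rewrite -IJ.
Qed.

Lemma sqr_dvd_expr (S : comNzRingType) (b : S) m :
  (2 <= m)%N -> exists z, b ^+ m = b ^+ 2 * z.
Proof. by move=> le2m; exists (b ^+ (m - 2)); rewrite -exprD subnKC. Qed.

Section RootsCharP.
Variables (S : idomainType) (p : nat) (x : S) (r : nat -> S).
Hypotheses (p_prime : prime p) (r_roots : compat_rootsp p x r) (x_neq0 : x != 0).

Lemma rootp_expr n k : r n = r (n + k) ^+ (p ^ k).
Proof.
case: r_roots => _ r_pow; elim: k => [|k IH]; first by rewrite addn0 expr1.
by rewrite IH -(r_pow (n + k)) -exprM expnS mulnC addnS.
Qed.

Lemma rootp_x n : x = r n ^+ (p ^ n).
Proof. by case: r_roots => <- _; apply: rootp_expr. Qed.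

Lemma rootp_neq0 n : r n != 0.
Proof.
apply: contraNneq x_neq0 => rn0.
by rewrite (rootp_x n) rn0 expr0n gtn_eqF ?expn_gt0 ?prime_gt0.
Qed.

Lemma rootp_telescoping : telescoping r (fun n => r n.+1 ^+ p.-1).
Proof.
by case: r_roots => _ r_pow n; rewrite -exprSr prednK ?prime_gt0 // r_pow.
Qed.

(* b = x^(1/p^D) works for the first D generators: r_i = b^(p^(D-i)). *)
Lemma rootp_deep D : exists b k, [/\ span r b, x = b ^+ k &
  forall i, (i < D)%N -> exists z, r i = b ^+ 2 * z].
Proof.
exists (r D), (p ^ D)%N; split; [exact: span_gen | exact: rootp_x |].
move=> i lt_iD; rewrite (rootp_expr i (D - i)%N) (subnKC (ltnW lt_iD)).
apply: sqr_dvd_expr; rewrite (leq_trans (prime_gt1 p_prime)) //.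
by rewrite -{1}(expn1 p); apply: leq_pexp2l; [exact: prime_gt0 | rewrite subn_gt0].
Qed.

End RootsCharP.

(* Characteristic zero: r_n = x^(1/n) for n >= 1; (x^oo)S is generated by the
   r_(i+1), and also by the telescoping dyadic roots r_(2^n). *)
Section RootsCharZero.
Variables (S : idomainType) (x : S) (r : nat -> S).
Hypotheses (r_roots : compat_roots0 x r) (x_neq0 : x != 0).

Lemma root0_x n : (0 < n)%N -> x = r n ^+ n.
Proof. by case: r_roots => r1 r_pow n_gt0; rewrite -r1 -(r_pow 1%N n) ?mul1n. Qed.

Lemma root0_neq0 n : (0 < n)%N -> r n != 0.
Proof.
move=> n_gt0; apply: contraNneq x_neq0 => rn0.
by rewrite (root0_x n_gt0) rn0 expr0n gtn_eqF.
Qed.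

Lemma root0_dyadic_telescoping :
  telescoping (fun n => r (2 ^ n)%N) (fun n => r (2 ^ n.+1)%N).
Proof.
by case: r_roots => _ r_pow n; rewrite expnSr -expr2 r_pow ?expn_gt0.
Qed.

Lemma xinf_ideal0_dyadic s :
  xinf_ideal0 r s <-> span (fun n => r (2 ^ n)%N) s.
Proof.
case: r_roots => _ r_pow; split; last first.
  apply: (@span_sub _ (fun n => r (2 ^ n)%N) (fun i => r i.+1)) => n.
  rewrite -(prednK (expn_gt0 2 n)); exact: (span_gen (fun i => r i.+1)).
apply: (@span_sub _ (fun i => r i.+1) (fun n => r (2 ^ n)%N)) => n.
(* r_(n+1) = w^(2^n) is a multiple of r_(2^n) = w^(n+1), w = r_((n+1) 2^n) *)
set w := r (n.+1 * 2 ^ n)%N.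
have r_n1 : r n.+1 = w ^+ (2 ^ n) by rewrite r_pow ?expn_gt0.
have r_2n : r (2 ^ n)%N = w ^+ n.+1 by rewrite /w mulnC r_pow ?expn_gt0.
rewrite r_n1 -(subnKC (ltn_expl n (ltnSn 1))) exprD -r_2n mulrC.
exact/spanM/span_gen.
Qed.

(* b = x^(1/N), N = 2 D!, works for the first D generators:
   r_(i+1) = b^(N/(i+1)) with N/(i+1) >= 2. *)
Lemma root0_deep D : exists b k, [/\ xinf_ideal0 r b, x = b ^+ k &
  forall i, (i < D)%N -> exists z, r i.+1 = b ^+ 2 * z].
Proof.
case: r_roots => _ r_pow; set N := (2 * D`!)%N.
have N_gt0 : (0 < N)%N by rewrite muln_gt0 fact_gt0.
exists (r N), N; split.
- by rewrite -(prednK N_gt0); exact: (span_gen (fun i => r i.+1)).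
- exact: root0_x.
move=> i lt_iD; set m := (2 * (D`! %/ i.+1))%N.
have dvd_iD : (i.+1 %| D`!)%N by rewrite dvdn_fact.
have iN : (i.+1 * m)%N = N by rewrite /m mulnCA [(i.+1 * _)%N]mulnC divnK.
have m_ge2 : (2 <= m)%N by rewrite leq_pmulr // divn_gt0 // dvdn_leq ?fact_gt0.
by rewrite -(r_pow i.+1 m) // ?iN; [exact: sqr_dvd_expr | exact: leq_trans m_ge2].
Qed.

End RootsCharZero.

Lemma xinf_idealp_res_not_projective (S : idomainType) (p : nat) (x : S)
    (r : nat -> S) :
  prime p -> compat_rootsp p x r -> x != 0 -> x \notin GRing.unit ->
  free_res_len_le1 (xinf_idealp r) /\ ~ projective_ideal (xinf_idealp r).
Proof.
move=> p_prime r_roots x_neq0 x_nonunit; split.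
  exact: telescoping_resolution (rootp_telescoping p_prime r_roots)
                                (rootp_neq0 p_prime r_roots x_neq0).
apply: not_projective_span x_neq0 x_nonunit _ (rootp_deep p_prime r_roots).
by case: r_roots => <- _; apply: span_gen.
Qed.

Lemma xinf_ideal0_res_not_projective (S : idomainType) (x : S) (r : nat -> S) :
  compat_roots0 x r -> x != 0 -> x \notin GRing.unit ->
  free_res_len_le1 (xinf_ideal0 r) /\ ~ projective_ideal (xinf_ideal0 r).
Proof.
move=> r_roots x_neq0 x_nonunit; split.
  apply: (@free_res_ext S (span (fun n => r (2 ^ n)%N))).
    by move=> s; rewrite (xinf_ideal0_dyadic r_roots).
  apply: telescoping_resolution (root0_dyadic_telescoping r_roots) _ => n.
  exact/(root0_neq0 r_roots x_neq0)/expn_gt0.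
apply: (not_projective_span x_neq0 x_nonunit _ (root0_deep r_roots)).
by case: r_roots => <- _; apply: (span_gen (fun i => r i.+1) 0).
Qed.

Theorem lemma4p2 (R S : idomainType) (f : {rmorphism R -> S})
  (hS : is_abs_integral_closure f) (x : S)
  (hx0 : x != 0) (hxu : x \notin GRing.unit) :
  (char_zero R ->
     forall r : nat -> S, compat_roots0 x r ->
       free_res_len_le1 (xinf_ideal0 r) /\
       (noetherian R -> henselian_local R -> ~ projective_ideal (xinf_ideal0 r)))
  /\
  (forall p : nat, char_p R p ->
     forall r : nat -> S, compat_rootsp p x r ->
       free_res_len_le1 (xinf_idealp r) /\
       (noetherian R -> henselian_local R -> ~ projective_ideal (xinf_idealp r))).
Proof.
split=> [_ r r_roots | p [p_prime _] r r_roots].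
  by have [res not_proj] := xinf_ideal0_res_not_projective r_roots hx0 hxu.
by have [res not_proj] := xinf_idealp_res_not_projective p_prime r_roots hx0 hxu.
Qed.
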